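(* Skeptic can weakly force the event \[ E_3:=\Bigl\{\xi:\ |s_n|>\sqrt n-1\ \text{for infinitely many } n\ \ \text{or}\ \ \bigl(\limsup_{n\to\infty}|s_n|=\infty\ \text{and}\ s_n\neq0\ \text{for all but finitely many } n\bigr)\Bigr\}. \]
   Context: Fair-coin game: in rounds $n=1,2,\dots$ Skeptic announces $M_n\in\mathbb{R}$ (depending only on $x_1,\dots,x_{n-1}$), then Reality announces $x_n\in\{-1,1\}$. A path is an infinite sequence $\xi=x_1x_2\cdots\in\{-1,1\}^{\mathbb{N}}$, and $\Omega$ is the set of paths. We write $s_n:=x_1+\cdots+x_n$, with $s_0=0$. The capital process of a strategy with zero initial capital is $\mathcal{K}^{\mathcal{P}}_n=\sum_{k=1}^nM_kx_k$. Skeptic weakly forces $E\subseteq\Omega$ if some strategy $\mathcal{P}$ has $\mathcal{K}^{\mathcal{P}}_n(\xi)\ge-1$ for all $\xi\in\Omega$ and $n\ge0$, and $\limsup_n\mathcal{K}^{\mathcal{P}}_n(\xi)=\infty$ for every $\xi\notin E$. *)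

From Stdlib Require Import Reals List.
Open Scope R_scope.

(* A path xi = x_1 x_2 ... is encoded as a function nat -> bool:
   xi k is the move x_(k+1), with true = +1 and false = -1. *)
Definition path := nat -> bool.

Definition move (b : bool) : R := if b then 1 else -1.

Fixpoint prefix (xi : path) (n : nat) : list bool :=
  match n with
  | O => nil
  | S m => prefix xi m ++ (xi m :: nil)
  end.

Fixpoint s (xi : path) (n : nat) : R :=
  match n with
  | O => 0
  | S m => s xi m + move (xi m)
  end.

(* A strategy: M_n is a function of the history x_1 ... x_(n-1). *)
Definition strategy := list bool -> R.

Fixpoint capital (P : strategy) (xi : path) (n : nat) : R :=
  match n with
  | O => 0
  | S m => capital P xi m + P (prefix xi m) * move (xi m)
  end.

Definition limsup_infty (u : nat -> R) : Prop :=
  forall C : R, forall N : nat, exists n : nat, (n >= N)%nat /\ u n > C.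

Definition weakly_forces (E : path -> Prop) : Prop :=
  exists P : strategy,
    (forall (xi : path) (n : nat), capital P xi n >= -1) /\
    (forall xi : path, ~ E xi -> limsup_infty (capital P xi)).

Definition E3 (xi : path) : Prop :=
  (forall N : nat, exists n : nat, (n >= N)%nat /\ Rabs (s xi n) > sqrt (INR n) - 1)
  \/
  (limsup_infty (fun n => Rabs (s xi n)) /\
   exists N : nat, forall n : nat, (n >= N)%nat -> s xi n <> 0).

From Stdlib Require Import Reals List Lra Lia Psatz Classical ClassicalDescription.
Open Scope R_scope.

(* Skeptic already forces the smaller event "|s_n| > sqrt n - 1 infinitely often".
   Since (s + x)^2 = s^2 + 2 s x + 1 for x = +-1, betting -2 s_n from time m on
   earns exactly (n - s_n^2) - (m - s_m^2).  Run this bet only while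
   |s_j| <= sqrt j - 1; then s_n^2 <= n at every time n, so the gain never drops
   below -m.  The mixture of these strategies over all starting times m, with
   weights 2^-(m+1) / (m + 1), therefore never loses more than 1.  If the path
   stays in the band |s_n| <= sqrt n - 1 from time N on, the N-th component
   earns at least 2 sqrt n - 1 - (N - s_N^2), which is unbounded. *)

Definition in_band (xi : path) (j : nat) : Prop :=
  Rabs (s xi j) <= sqrt (INR j) - 1.

Definition in_band_from (xi : path) (m n : nat) : Prop :=
  (m <= n)%nat /\ forall j, (m <= j <= n)%nat -> in_band xi j.

Definition band_bet (xi : path) (m n : nat) : R :=
  if excluded_middle_informative (in_band_from xi m n) then -2 * s xi n else 0.

Fixpoint band_gain (xi : path) (m n : nat) : R :=
  match n with
  | O => 0
  | S k => band_gain xi m k + band_bet xi m k * move (xi k)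
  end.

Definition weight (m : nat) : R := (1/2) ^ S m / (INR m + 1).

(* The components m > n have not started yet at time n + 1 and bet 0. *)
Definition mixture_bet (xi : path) (n : nat) : R :=
  sum_f_R0 (fun m => weight m * band_bet xi m n) n.

(* The padding value [true] is never read: see [mixture_prefix]. *)
Definition path_of_history (h : list bool) : path := fun k => nth k h true.

Definition mixture : strategy :=
  fun h => mixture_bet (path_of_history h) (length h).

Lemma move_sq (b : bool) : move b * move b = 1.
Proof. destruct b; simpl; lra. Qed.

Lemma Rabs_move (b : bool) : Rabs (move b) = 1.
Proof. destruct b; unfold move, Rabs; destruct Rcase_abs; lra. Qed.

Lemma sq_le_of_Rabs_le (x y : R) : Rabs x <= y -> x * x <= y * y.
Proof. unfold Rabs; destruct (Rcase_abs x); intros; nra. Qed.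


Lemma prefix_length (xi : path) (n : nat) : length (prefix xi n) = n.
Proof. induction n; simpl; [reflexivity|]. rewrite length_app, IHn; simpl; lia. Qed.

Lemma nth_prefix (xi : path) (n k : nat) :
  (k < n)%nat -> nth k (prefix xi n) true = xi k.
Proof.
  induction n as [|n IHn]; intros Hk; [lia|]. simpl.
  destruct (Nat.eq_dec k n) as [->|Hkn].
  - rewrite app_nth2, prefix_length, Nat.sub_diag; [reflexivity|].
    rewrite prefix_length; lia.
  - rewrite app_nth1 by (rewrite prefix_length; lia). apply IHn; lia.
Qed.

Lemma s_ext (xi xi' : path) (n : nat) :
  (forall k, (k < n)%nat -> xi k = xi' k) ->
  forall j, (j <= n)%nat -> s xi j = s xi' j.
Proof.
  intros Hagree j; induction j as [|j IHj]; intros Hj; simpl; [reflexivity|].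
  rewrite IHj, Hagree by lia. reflexivity.
Qed.

Lemma mixture_bet_ext (xi xi' : path) (n : nat) :
  (forall k, (k < n)%nat -> xi k = xi' k) -> mixture_bet xi n = mixture_bet xi' n.
Proof.
  intros Hagree. pose proof (s_ext xi xi' n Hagree) as Hs.
  unfold mixture_bet. apply sum_eq. intros m _. f_equal. unfold band_bet.
  assert (Hband : in_band_from xi m n <-> in_band_from xi' m n).
  { unfold in_band_from, in_band.
    split; intros [Hmn Hj]; split; trivial; intros j Hjn;
      specialize (Hj j Hjn); [rewrite <- Hs | rewrite Hs]; trivial; lia. }
  destruct (excluded_middle_informative (in_band_from xi m n));
    destruct (excluded_middle_informative (in_band_from xi' m n)); try tauto.
  rewrite Hs; trivial.
Qed.

Lemma mixture_prefix (xi : path) (n : nat) : mixture (prefix xi n) = mixture_bet xi n.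
Proof.
  unfold mixture. rewrite prefix_length. apply mixture_bet_ext.
  intros k Hk. apply nth_prefix; trivial.
Qed.


Lemma band_gain_not_started (xi : path) (m n : nat) :
  (n <= m)%nat -> band_gain xi m n = 0.
Proof.
  induction n as [|n IHn]; intros Hnm; simpl; [reflexivity|].
  unfold band_bet. destruct (excluded_middle_informative (in_band_from xi m n)).
  - exfalso. unfold in_band_from in *; lia.
  - rewrite IHn by lia. ring.
Qed.

Lemma band_gain_in_band (xi : path) (m n : nat) :
  (m <= n)%nat -> (forall j, (m <= j < n)%nat -> in_band xi j) ->
  band_gain xi m n = (INR n - s xi n * s xi n) - (INR m - s xi m * s xi m).
Proof.
  induction n as [|n IHn]; intros Hmn Hband.
  - replace m with 0%nat by lia. simpl. ring.
  - destruct (Nat.eq_dec m (S n)) as [->|Hm].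
    + rewrite band_gain_not_started by lia. ring.
    + simpl band_gain. unfold band_bet.
      destruct (excluded_middle_informative (in_band_from xi m n)) as [_|Hout].
      * rewrite IHn by (trivial; lia || (intros; apply Hband; lia)).
        rewrite S_INR. simpl s. pose proof (move_sq (xi n)). nra.
      * exfalso. apply Hout. split; [lia|]. intros j Hj. apply Hband. lia.
Qed.

Lemma in_band_next_sq (xi : path) (n : nat) :
  in_band xi n -> s xi (S n) * s xi (S n) <= INR n.
Proof.
  unfold in_band. intros Hn.
  rewrite <- (sqrt_sqrt (INR n)) by apply pos_INR.
  apply sq_le_of_Rabs_le. simpl s.
  pose proof (Rabs_triang (s xi n) (move (xi n))). rewrite Rabs_move in *. lra.
Qed.

Lemma band_gain_lower (xi : path) (m n : nat) : band_gain xi m n >= - INR m.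
Proof.
  pose proof (pos_INR m).
  induction n as [|n IHn]; [simpl; lra|].
  destruct (classic (in_band_from xi m n)) as [[Hmn Hband]|Hout].
  - rewrite band_gain_in_band by (lia || (intros; apply Hband; lia)).
    pose proof (in_band_next_sq xi n (Hband n (conj Hmn (le_n n)))).
    rewrite S_INR. nra.
  - simpl. unfold band_bet.
    destruct (excluded_middle_informative (in_band_from xi m n)); [tauto | lra].
Qed.

Lemma weight_pos (m : nat) : 0 < weight m.
Proof.
  unfold weight. apply Rdiv_lt_0_compat; [apply pow_lt; lra|].
  pose proof (pos_INR m); lra.
Qed.

Lemma weighted_band_gain_lower (xi : path) (m n : nat) :
  weight m * band_gain xi m n >= - (1/2) ^ S m.
Proof.
  pose proof (band_gain_lower xi m n). pose proof (pos_INR m).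
  assert (Hw : weight m * (INR m + 1) = (1/2) ^ S m) by (unfold weight; field; lra).
  pose proof (weight_pos m). nra.
Qed.

Lemma band_gain_diverges (xi : path) (N n : nat) :
  (forall j, (j >= N)%nat -> in_band xi j) -> (N <= n)%nat ->
  band_gain xi N n >= 2 * sqrt (INR n) - 1 - (INR N - s xi N * s xi N).
Proof.
  intros Hband HNn.
  rewrite band_gain_in_band by (trivial || (intros; apply Hband; lia)).
  assert (Hn := Hband n HNn). unfold in_band in Hn.
  pose proof (sq_le_of_Rabs_le _ _ Hn).
  pose proof (sqrt_sqrt (INR n) (pos_INR n)). nra.
Qed.


Lemma capital_mixture (xi : path) (n : nat) :
  capital mixture xi n = sum_f_R0 (fun m => weight m * band_gain xi m n) n.
Proof.
  induction n as [|n IHn]; [simpl; ring|].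
  simpl capital. rewrite IHn, mixture_prefix. unfold mixture_bet.
  rewrite <- (Rmult_comm (move (xi n))), scal_sum, <- sum_plus. cbn [sum_f_R0].
  rewrite (band_gain_not_started xi (S n) (S n)) by lia.
  rewrite Rmult_0_r, Rplus_0_r. apply sum_eq. intros m _. simpl band_gain. ring.
Qed.

Lemma sum_neg_half_pow (n : nat) :
  sum_f_R0 (fun m => - (1/2) ^ S m) n = (1/2) ^ S n - 1.
Proof. induction n as [|n IHn]; simpl in *; [lra|]. rewrite IHn. lra. Qed.

Lemma sum_Rle_except (a f : nat -> R) (N n : nat) :
  (N <= n)%nat -> (forall m, (m <= n)%nat -> m <> N -> a m <= f m) ->
  sum_f_R0 a n - a N + f N <= sum_f_R0 f n.
Proof.
  intros HNn Hle. induction n as [|n IHn].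
  - replace N with 0%nat by lia. simpl. lra.
  - simpl. destruct (Nat.eq_dec N (S n)) as [->|HN].
    + assert (sum_f_R0 a n <= sum_f_R0 f n) by (apply sum_Rle; intros; apply Hle; lia).
      lra.
    + assert (sum_f_R0 a n - a N + f N <= sum_f_R0 f n)
        by (apply IHn; [lia | intros; apply Hle; lia]).
      assert (a (S n) <= f (S n)) by (apply Hle; lia).
      lra.
Qed.

Lemma capital_mixture_lower (xi : path) (n : nat) : capital mixture xi n >= -1.
Proof.
  rewrite capital_mixture.
  assert (Hsum : sum_f_R0 (fun m => - (1/2) ^ S m) n
                 <= sum_f_R0 (fun m => weight m * band_gain xi m n) n).
  { apply sum_Rle. intros m _. pose proof (weighted_band_gain_lower xi m n). lra. }
  rewrite sum_neg_half_pow in Hsum. pose proof (pow_lt (1/2) (S n)). lra.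
Qed.

Lemma capital_mixture_ge_component (xi : path) (N n : nat) :
  (N <= n)%nat -> capital mixture xi n >= -1 + weight N * band_gain xi N n.
Proof.
  intros HNn. rewrite capital_mixture.
  pose proof (sum_Rle_except (fun m => - (1/2) ^ S m)
                (fun m => weight m * band_gain xi m n) N n HNn) as Hsum.
  cbv beta in Hsum. rewrite sum_neg_half_pow in Hsum.
  assert (Hpos : 0 < (1/2) ^ S n) by (apply pow_lt; lra).
  assert (Hle : forall m, (m <= n)%nat -> m <> N ->
                - (1/2) ^ S m <= weight m * band_gain xi m n).
  { intros m _ _. pose proof (weighted_band_gain_lower xi m n). lra. }
  pose proof (Hsum Hle). pose proof (pow_lt (1/2) (S N)). lra.
Qed.

Lemma sqrt_INR_unbounded (K : R) (N0 : nat) :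
  exists n, (n >= N0)%nat /\ sqrt (INR n) > K.
Proof.
  destruct (INR_unbounded (Rabs K * Rabs K)) as [n0 Hn0].
  exists (n0 + N0)%nat. split; [lia|].
  apply Rle_lt_trans with (Rabs K); [apply RRle_abs|].
  rewrite <- (sqrt_square (Rabs K)) by apply Rabs_pos.
  pose proof (le_INR n0 (n0 + N0) ltac:(lia)).
  apply sqrt_lt_1; [apply Rle_0_sqr | apply pos_INR | lra].
Qed.

Lemma capital_mixture_unbounded (xi : path) (N : nat) :
  (forall j, (j >= N)%nat -> in_band xi j) -> limsup_infty (capital mixture xi).
Proof.
  intros Hband C N0.
  set (c := INR N - s xi N * s xi N).
  pose proof (weight_pos N) as Hw.
  destruct (sqrt_INR_unbounded (((C + 1) / weight N + 1 + c) / 2) (max N0 N))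
    as [n [Hn Hsqrt]].
  exists n. split; [lia|].
  pose proof (capital_mixture_ge_component xi N n ltac:(lia)).
  pose proof (band_gain_diverges xi N n Hband ltac:(lia)) as Hgain. fold c in Hgain.
  assert (Hscaled : weight N * ((C + 1) / weight N) < weight N * band_gain xi N n)
    by (apply Rmult_lt_compat_l; lra).
  replace (weight N * ((C + 1) / weight N)) with (C + 1) in Hscaled by (field; lra).
  lra.
Qed.

Lemma in_band_eventually_of_not_E3 (xi : path) :
  ~ E3 xi -> exists N, forall n, (n >= N)%nat -> in_band xi n.
Proof.
  intros HE. apply NNPP. intros Hnever. apply HE. left. intros N.
  apply NNPP. intros HN. apply Hnever. exists N. intros n Hn.
  apply Rnot_lt_le. intros Hout. apply HN. exists n. split; trivial.
Qed.

Theorem corollary1 : weakly_forces E3.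
Proof.
  exists mixture. split.
  - exact capital_mixture_lower.
  - intros xi HE.
    destruct (in_band_eventually_of_not_E3 xi HE) as [N Hband].
    exact (capital_mixture_unbounded xi N Hband).
Qed.
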